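(* Let $\mathcal N_1,\mathcal N_2,\mathcal N_3$ be nested graphs and let $\phi:\mathcal N_1\to\mathcal N_2$ and $\psi:\mathcal N_2\to\mathcal N_3$ be admissible functors. Then the composite $\psi\circ\phi:\mathcal N_1\to\mathcal N_3$ is admissible.
   Context: A nested graph is a small category $\mathcal N$ for which there exists at least one functor $G:\mathcal N\to\underline n$ to a finite ordinal $\underline n$ (viewed as the category with a unique morphism $i\to j$ when $i\le j$ and none otherwise) sending every non-identity morphism to a non-identity morphism. Objects of a nested graph are called nodes. A flag is a non-identity morphism; a flag is said to be decorated by its domain. A flag is irreducible if it cannot be written as a composite of two flags. A functor $\phi:\mathcal N_1\to\mathcal N_2$ contracts a flag $f$ if $\phi(f)$ is an identity. A functor $\phi:\mathcal N_1\to\mathcal N_2$ between nested graphs is admissible if (1) for every irreducible flag $f$ of $\mathcal N_1$, $\phi(f)$ is either an identity or an irreducible flag, and (2) for every irreducible flag $f:A\to B$ of $\mathcal N_1$, if $\phi$ contracts $f$ then $\phi$ contracts every irreducible flag decorated by $A$ (i.e. with domain $A$). *)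

From mathcomp Require Import all_boot.
Set Implicit Arguments. Unset Strict Implicit. Unset Printing Implicit Defensive.

Record Cat := {
  Ob :> Type;
  Hom : Ob -> Ob -> Type;
  cid : forall A, Hom A A;
  ccomp : forall A B C, Hom B C -> Hom A B -> Hom A C;
  ccomp_id_l : forall A B (f : Hom A B), ccomp (cid B) f = f;
  ccomp_id_r : forall A B (f : Hom A B), ccomp f (cid A) = f;
  ccomp_assoc : forall A B C D (h : Hom C D) (g : Hom B C) (f : Hom A B),
      ccomp h (ccomp g f) = ccomp (ccomp h g) f
}.
Arguments Hom : clear implicits.
Arguments cid {c} A.
Arguments ccomp {c A B C} g f.

Record Functor (C D : Cat) := {
  fob :> Ob C -> Ob D;
  fmor : forall A B : Ob C, Hom C A B -> Hom D (fob A) (fob B);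
  fmor_id : forall A : Ob C, fmor (cid A) = cid (fob A);
  fmor_comp : forall A B E : Ob C, forall (g : Hom C B E) (f : Hom C A B),
      fmor (ccomp g f) = ccomp (fmor g) (fmor f)
}.
Arguments fmor {C D} _ {A B} _.

Definition fcompose (C D E : Cat) (psi : Functor D E) (phi : Functor C D) :
  Functor C E.
Proof.
refine {| fob := fun A => psi (phi A);
          fmor := fun A B f => fmor psi (fmor phi f) |}.
- by move=> A; rewrite !fmor_id.
- by move=> A B E' g f; rewrite !fmor_comp.
Defined.

Definition ordinal_cat (n : nat) : Cat.
Proof.
refine {| Ob := 'I_n;
          Hom := fun i j => is_true (i <= j)%N;
          cid := fun i => leqnn i;
          ccomp := fun i j k (g : (j <= k)%N) (f : (i <= j)%N) => leq_trans f g |}.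
- by move=> *; apply: bool_irrelevance.
- by move=> *; apply: bool_irrelevance.
- by move=> *; apply: bool_irrelevance.
Defined.

Definition is_identity (C : Cat) (A B : C) (f : Hom C A B) : Prop :=
  exists e : A = B, eq_rect A (Hom C A) (cid A) B e = f.

Definition flag (C : Cat) (A B : C) (f : Hom C A B) : Prop := ~ is_identity f.

Definition irreducible (C : Cat) (A B : C) (f : Hom C A B) : Prop :=
  flag f /\
  ~ (exists (X : C) (g : Hom C A X) (h : Hom C X B),
        flag g /\ flag h /\ ccomp h g = f).

Definition nested_graph (C : Cat) : Prop :=
  exists (n : nat) (G : Functor C (ordinal_cat n)),
    forall (A B : C) (f : Hom C A B), flag f -> flag (fmor G f).

Definition admissible (C D : Cat) (phi : Functor C D) : Prop :=
  (forall (A B : C) (f : Hom C A B), irreducible f ->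
      is_identity (fmor phi f) \/ irreducible (fmor phi f)) /\
  (forall (A B : C) (f : Hom C A B), irreducible f -> is_identity (fmor phi f) ->
      forall (B' : C) (g : Hom C A B'), irreducible g -> is_identity (fmor phi g)).

From mathcomp Require Import all_boot.

(* If psi o phi contracts an irreducible flag f : A -> B, either phi already
   contracts f, and then every irreducible flag out of A, or phi f is an
   irreducible flag out of phi A contracted by psi; in the latter case each
   irreducible flag g out of A is sent by phi to an identity or to an
   irreducible flag out of phi A, which psi contracts in both cases. *)

Lemma fmor_is_identity (C D : Cat) (F : Functor C D) (A B : C) (f : Hom C A B) :
  is_identity f -> is_identity (fmor F f).
Proof.
case=> e <-; clear f; case: B / e => /=.
by exists erefl; rewrite /= fmor_id.
Qed.

Section AdmissibleComposite.

Variables (N1 N2 N3 : Cat) (phi : Functor N1 N2) (psi : Functor N2 N3).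
Hypotheses (phi_adm : admissible phi) (psi_adm : admissible psi).

Lemma fcompose_irreducible (A B : N1) (f : Hom N1 A B) : irreducible f ->
  is_identity (fmor (fcompose psi phi) f) \/
  irreducible (fmor (fcompose psi phi) f).
Proof.
move=> irr_f /=; case: (phi_adm.1 _ _ f irr_f) => [id_phif | irr_phif].
  by left; apply: fmor_is_identity.
exact: psi_adm.1.
Qed.

Lemma fcompose_contract (A B : N1) (f : Hom N1 A B) : irreducible f ->
  is_identity (fmor (fcompose psi phi) f) ->
  forall (B' : N1) (g : Hom N1 A B'), irreducible g ->
    is_identity (fmor (fcompose psi phi) g).
Proof.
move=> irr_f /= id_f B' g irr_g.
case: (phi_adm.1 _ _ f irr_f) => [id_phif | irr_phif].
  exact/fmor_is_identity/(phi_adm.2 _ _ f irr_f id_phif).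
case: (phi_adm.1 _ _ g irr_g) => [id_phig | irr_phig].
  exact: fmor_is_identity.
exact: (psi_adm.2 _ _ _ irr_phif id_f _ _ irr_phig).
Qed.

End AdmissibleComposite.

Theorem mainTheorem1 (N1 N2 N3 : Cat) :
  nested_graph N1 -> nested_graph N2 -> nested_graph N3 ->
  forall (phi : Functor N1 N2) (psi : Functor N2 N3),
    admissible phi -> admissible psi -> admissible (fcompose psi phi).
Proof.
move=> _ _ _ phi psi phi_adm psi_adm; split.
- exact: fcompose_irreducible.
- exact: fcompose_contract.
Qed.
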